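(* Let $d\ge2$, $\mathbf u,\mathbf w\in\mathcal C_{d-1}$ with $\bar w_i>0$ for all $i\in\{1,\dots,d\}$, and $\mathbf r\in[0,1]^d\setminus\{\mathbf 0\}$. For $f(\mathbf x)=-\log\langle\mathbf r,\bar{\mathbf x}\rangle$, we have $$|\langle\nabla f(\mathbf w),\mathbf u-\mathbf w\rangle|\le 1\vee\max_{i\in[d]}\frac{\bar u_i}{\bar w_i}.$$
   Context: $\mathcal C_{d-1}=\{\mathbf u\in\mathbb R^{d-1}:u_i\ge0,\ \sum_iu_i\le1\}$. For $\mathbf v\in\mathbb R^{d-1}$, $\bar{\mathbf v}=(v_1,\dots,v_{d-1},1-\sum_{i=1}^{d-1}v_i)\in\mathbb R^d$. $a\vee b=\max(a,b)$ and $[d]=\{1,\dots,d\}$. *)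

From HB Require Import structures.
From mathcomp Require Import all_boot all_order all_algebra.
From mathcomp Require Import all_classical all_reals all_analysis.
Set Implicit Arguments. Unset Strict Implicit. Unset Printing Implicit Defensive.
Import Order.TTheory GRing.Theory Num.Theory.
Import numFieldNormedType.Exports.
Local Open Scope ring_scope.

(* The simplex C_n = { u in R^n : u_i >= 0, sum_i u_i <= 1 } (n = d-1). *)
Definition simplexC (R : realType) (n : nat) (u : 'rV[R]_n) : Prop :=
  (forall i, 0 <= u 0 i) /\ \sum_i u 0 i <= 1.

(* bar v = (v_1, ..., v_n, 1 - sum_i v_i) in R^(n+1); the last coordinate is ord_max. *)
Definition vbar (R : realType) (n : nat) (v : 'rV[R]_n) : 'rV[R]_n.+1 :=
  \row_(i < n.+1) match unlift ord_max i with
                  | Some j => v 0 j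
                  | None => 1 - \sum_k v 0 k
                  end.

Definition dotv (R : realType) (m : nat) (a b : 'rV[R]_m) : R :=
  \sum_i a 0 i * b 0 i.

Definition grad (R : realType) (n : nat) (f : 'rV[R]_n -> R) (w : 'rV[R]_n)
  : 'rV[R]_n :=
  \row_(j < n) derive f w (delta_mx 0 j).

Definition flog (R : realType) (n : nat) (r : 'rV[R]_n.+1) (x : 'rV[R]_n) : R :=
  - ln (dotv r (vbar x)).

(** The map x |-> <r, bar x> is affine, S(x) = r_d + <slope r, x>, so the
gradient of f = - log S at w is - slope r / S(w) and
<grad f(w), u - w> = - (S(u) - S(w)) / S(w) = 1 - S(u) / S(w).
Since r >= 0 and bar u >= 0, while bar u_i <= M bar w_i for the maximum M of
the ratios, we have 0 <= S(u) <= M S(w); the quantity thus lies in [1 - M, 1],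
and M >= 1 bounds its absolute value. *)

From HB Require Import structures.
From mathcomp Require Import all_boot all_order all_algebra.
From mathcomp Require Import all_classical all_reals all_analysis.
From mathcomp Require Import ring lra.
Set Implicit Arguments. Unset Strict Implicit. Unset Printing Implicit Defensive.
Import Order.TTheory GRing.Theory Num.Theory.
Import numFieldNormedType.Exports.
Local Open Scope ring_scope.

Section InnerProduct.
Variables (R : realType) (m : nat).
Implicit Types (a b c : 'rV[R]_m) (k : R).

Lemma dotvDr a b c : dotv a (b + c) = dotv a b + dotv a c.
Proof. by rewrite /dotv -big_split; apply: eq_bigr => i _; rewrite mxE mulrDr. Qed.

Lemma dotvBr a b c : dotv a (b - c) = dotv a b - dotv a c.
Proof. by rewrite /dotv -sumrB; apply: eq_bigr => i _; rewrite !mxE mulrBr. Qed.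

Lemma dotvZl k a b : dotv (k *: a) b = k * dotv a b.
Proof. by rewrite /dotv mulr_sumr; apply: eq_bigr => i _; rewrite mxE mulrA. Qed.

Lemma dotvZr k a b : dotv a (k *: b) = k * dotv a b.
Proof. by rewrite /dotv mulr_sumr; apply: eq_bigr => i _; rewrite mxE mulrCA. Qed.

Lemma dotv_delta_mx a j : dotv a (delta_mx 0 j) = a 0 j.
Proof.
rewrite /dotv (bigD1 j) //= mxE !eqxx mulr1 big1 ?addr0 // => i neq_ij.
by rewrite mxE eqxx (negbTE neq_ij) mulr0.
Qed.

Lemma dotv_ge0 a b :
  (forall i, 0 <= a 0 i) -> (forall i, 0 <= b 0 i) -> 0 <= dotv a b.
Proof. by move=> a_ge0 b_ge0; apply: sumr_ge0 => i _; exact: mulr_ge0. Qed.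

Lemma dotv_gt0 a b :
  (forall i, 0 <= a 0 i) -> a != 0 -> (forall i, 0 < b 0 i) -> 0 < dotv a b.
Proof.
move=> a_ge0 a_neq0 b_gt0.
have [i ai_neq0] : exists i, a 0 i != 0.
  apply/existsP; apply: contraNT a_neq0 => /existsPn a0.
  by apply/eqP/matrixP => i j; rewrite ord1 mxE; apply/eqP/negbNE.
rewrite /dotv (bigD1 i) //=; apply: ltr_pwDl.
  by rewrite mulr_gt0 // lt_def ai_neq0 a_ge0.
by apply: sumr_ge0 => k _; rewrite mulr_ge0 // ltW.
Qed.

Lemma dotv_le_scale a b c M :
  (forall i, 0 <= a 0 i) -> (forall i, 0 < b 0 i) ->
  (forall i, c 0 i / b 0 i <= M) -> dotv a c <= M * dotv a b.
Proof.
move=> a_ge0 b_gt0 le_cbM; rewrite /dotv mulr_sumr; apply: ler_sum => i _.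
by rewrite mulrCA ler_wpM2l // -ler_pdivrMr.
Qed.

End InnerProduct.

Section AffineCoordinates.
Variables (R : realType) (n : nat).

Definition vbar_slope (r : 'rV[R]_n.+1) : 'rV[R]_n :=
  \row_j (r 0 (lift ord_max j) - r 0 ord_max).

Lemma dotv_vbar (r : 'rV[R]_n.+1) (x : 'rV[R]_n) :
  dotv r (vbar x) = r 0 ord_max + dotv (vbar_slope r) x.
Proof.
have lift_max i : widen_ord (leqnSn n) i = lift ord_max i.
  by apply: val_inj; rewrite /= /bump leqNgt ltn_ord.
rewrite /dotv big_ord_recr /= /vbar !mxE unlift_none.
under eq_bigr => i _ do rewrite mxE lift_max liftK.
rewrite mulrBr mulr1 mulr_sumr addrCA -sumrB; congr (_ + _).
by apply: eq_bigr => i _; rewrite mxE mulrBl.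
Qed.

Lemma vbar_ge0 (u : 'rV[R]_n) : simplexC u -> forall i, 0 <= vbar u 0 i.
Proof.
by move=> [u_ge0 sum_le1] i; rewrite mxE; case: unlift => [j|]; rewrite ?subr_ge0.
Qed.

End AffineCoordinates.

Section Gradient.
Variable R : realType.

Lemma derive_along_line (V : normedModType R) (f : V -> R) (a v : V) :
  derive f a v = derive (fun h : R => f (h *: v + a)) 0 1.
Proof.
rewrite /derive; do 2 f_equal; apply/funext => h /=.
by rewrite addr0 scale0r add0r -[h%:A]/(h * 1) mulr1.
Qed.

Lemma is_derive_neg_ln_affine (s c : R) :
  0 < s -> is_derive (0 : R) 1 (fun h : R => - ln (s + c * h)) (- (c / s)).
Proof.
move=> s_gt0.
have affine : is_derive (0 : R) 1 (fun h : R => s + c * h) c.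
  have := is_deriveD (is_derive_cst s (0 : R) (1 : R))
    (is_deriveZ c (is_derive_id (0 : R) (1 : R))).
  by rewrite add0r -[c *: 1]/(c * 1) mulr1.
have ln_at_s : is_derive (s + c * 0) 1 (@ln R) (s + c * 0)^-1.
  by apply: is_derive1_ln; rewrite mulr0 addr0.
have := is_deriveN (@is_derive1_comp _ _ (fun h => s + c * h) 0 _ _ ln_at_s affine).
by rewrite mulr0 addr0 mulrC.
Qed.

Variable n : nat.
Implicit Types (r : 'rV[R]_n.+1) (u w : 'rV[R]_n).

Lemma derive_flog r w j : 0 < dotv r (vbar w) ->
  derive (flog r) w (delta_mx 0 j) = - (vbar_slope r 0 j / dotv r (vbar w)).
Proof.
move=> Sw_gt0; rewrite derive_along_line.
have line h : flog r (h *: delta_mx 0 j + w) =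
    - ln (dotv r (vbar w) + vbar_slope r 0 j * h).
  by rewrite /flog !dotv_vbar dotvDr dotvZr dotv_delta_mx (mulrC h)
    (addrC (vbar_slope r 0 j * h)) addrA.
under eq_fun do rewrite line.
by have [_ ->] := is_derive_neg_ln_affine (vbar_slope r 0 j) Sw_gt0.
Qed.

Lemma grad_flog r w : 0 < dotv r (vbar w) ->
  grad (flog r) w = - (dotv r (vbar w))^-1 *: vbar_slope r.
Proof.
move=> Sw_gt0; apply/rowP => j.
by rewrite mxE derive_flog // [RHS]mxE mulNr mulrC.
Qed.

Lemma dotv_grad_flog r u w : 0 < dotv r (vbar w) ->
  dotv (grad (flog r) w) (u - w) = 1 - dotv r (vbar u) / dotv r (vbar w).
Proof.
move=> Sw_gt0; rewrite grad_flog // dotvZl dotvBr.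
have -> : dotv (vbar_slope r) u - dotv (vbar_slope r) w =
    dotv r (vbar u) - dotv r (vbar w) by rewrite !dotv_vbar; lra.
by field; exact: lt0r_neq0.
Qed.

End Gradient.

Lemma norm_1B_le (R : realDomainType) (x M : R) :
  0 <= x <= M -> 1 <= M -> `|1 - x| <= M.
Proof. by move=> /andP[x_ge0 x_leM] M_ge1; rewrite ler_norml; apply/andP; split; lra. Qed.

Theorem lemma16 (R : realType) (n : nat) (hn : (1 <= n)%N)
  (u w : 'rV[R]_n) (r : 'rV[R]_n.+1)
  (hu : simplexC u) (hw : simplexC w)
  (hwpos : forall i, 0 < vbar w 0 i)
  (hr01 : forall i, 0 <= r 0 i <= 1) (hr0 : r != 0) :
  `| dotv (grad (flog r) w) (u - w) |
    <= \big[Num.max/1]_(i < n.+1) (vbar u 0 i / vbar w 0 i).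
Proof.
set M := \big[Num.max/1]_(i < n.+1) _.
have r_ge0 i : 0 <= r 0 i by case/andP: (hr01 i).
have Sw_gt0 : 0 < dotv r (vbar w) by exact: dotv_gt0.
have Su_ge0 : 0 <= dotv r (vbar u) by apply: dotv_ge0 => //; exact: vbar_ge0.
have Su_le : dotv r (vbar u) <= M * dotv r (vbar w).
  by apply: dotv_le_scale => // i; exact: le_bigmax.
rewrite dotv_grad_flog //; apply: norm_1B_le; last exact: bigmax_ge_id.
by rewrite divr_ge0 ?(ltW Sw_gt0) //= ler_pdivrMr.
Qed.
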